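(* Let $G$ be a graph that has a proper VPG-representation $R_V$ in a $w\times h$-grid. Then every subgraph $G'$ of $G$ has an EPG-representation $R_E$ in a $2w\times 2h$-grid. Furthermore, if every vertex-path of $R_V$ is $x$-monotone, then $R_E$ can be chosen so that every vertex-path of $R_E$ is $x$-monotone.
   Context: The $w\times h$-grid consists of all grid-points $(i,j)$ with integer coordinates $1\le i\le w$, $1\le j\le h$, and all grid-edges joining grid-points at distance $1$. A vertex-path is a path in the grid. An EPG-representation of a graph $G$ assigns to each vertex $v$ a vertex-path $\mathrm{path}(v)$ such that $(v,w)$ is an edge of $G$ if and only if $\mathrm{path}(v)$ and $\mathrm{path}(w)$ share a grid-edge. A VPG-representation of $G$ assigns to each vertex a vertex-path such that $(v,w)$ is an edge if and only if $\mathrm{path}(v)$ and $\mathrm{path}(w)$ share a grid-point. A VPG-representation is proper if (a) every grid-edge is used by at most one vertex-path, and (b) whenever a grid-point $p$ belongs to both $\mathrm{path}(v)$ and $\mathrm{path}(w)$ ($v\neq w$), one of these two vertex-paths contains the grid-edge going rightward from $p$ and the other contains the grid-edge going upward from $p$. A vertex-path is $x$-monotone if every vertical line meeting it meets it in a single interval. *)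

From mathcomp Require Import all_boot.
Set Implicit Arguments. Unset Strict Implicit. Unset Printing Implicit Defensive.

(* Grid points are pairs (i, j) of naturals; point (i,j) has x = i, y = j. *)
Definition point := (nat * nat)%type.

Definition in_grid (w h : nat) (p : point) : bool :=
  (0 < p.1 <= w) && (0 < p.2 <= h).

Definition gadj (p q : point) : bool :=
  ((p.1 == q.1) && ((p.2 == q.2.+1) || (q.2 == p.2.+1))) ||
  ((p.2 == q.2) && ((p.1 == q.1.+1) || (q.1 == p.1.+1))).

Definition grid_path (w h : nat) (P : seq point) : Prop :=
  [/\ P <> [::], uniq P, all (in_grid w h) P &
      all (fun ab : point * point => gadj ab.1 ab.2) (zip P (behead P))].

Definition has_edge (P : seq point) (p q : point) : bool :=
  has (fun ab : point * point =>
         ((ab.1 == p) && (ab.2 == q)) || ((ab.1 == q) && (ab.2 == p)))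
      (zip P (behead P)).

Definition share_edge (P Q : seq point) : Prop :=
  exists p q : point, [/\ gadj p q, has_edge P p q & has_edge Q p q].

Definition share_point (P Q : seq point) : Prop :=
  exists p : point, p \in P /\ p \in Q.

Definition EPG_rep (w h : nat) (V : finType) (e : rel V) (R : V -> seq point) : Prop :=
  (forall v, grid_path w h (R v)) /\
  (forall v u, v != u -> (e v u <-> share_edge (R v) (R u))).

Definition VPG_rep (w h : nat) (V : finType) (e : rel V) (R : V -> seq point) : Prop :=
  (forall v, grid_path w h (R v)) /\
  (forall v u, v != u -> (e v u <-> share_point (R v) (R u))).

Definition right_of (p : point) : point := (p.1.+1, p.2).
Definition up_of (p : point) : point := (p.1, p.2.+1).

Definition proper_VPG (V : finType) (R : V -> seq point) : Prop :=
  (forall v u, v != u -> forall p q : point, gadj p q ->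
       ~ (has_edge (R v) p q /\ has_edge (R u) p q)) /\
  (forall v u, v != u -> forall p : point, p \in R v -> p \in R u ->
       (has_edge (R v) p (right_of p) && has_edge (R u) p (up_of p)) \/
       (has_edge (R v) p (up_of p) && has_edge (R u) p (right_of p))).

(* x-monotone: every vertical line x = c meets the path in a single interval,
   i.e. the points of the path with x-coordinate c are consecutive along it. *)
Definition x_monotone (P : seq point) : Prop :=
  forall (c i j k : nat), i <= j -> j <= k -> k < size P ->
    (nth (0, 0) P i).1 = c -> (nth (0, 0) P k).1 = c -> (nth (0, 0) P j).1 = c.

From mathcomp Require Import all_boot zify.
Set Implicit Arguments. Unset Strict Implicit. Unset Printing Implicit Defensive.

(* Blow every grid point a up into a 2x2 block of the doubled grid and replace each path
   by the chain of its blocks: inside a block the path runs between the corners facing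
   its predecessor and successor, and consecutive blocks are joined through the facing
   corners. Blocks are disjoint and so are the edges between them, so two refined paths
   can only share an edge inside the block of a common point a. By properness exactly two
   paths pass through a, one crossing it horizontally and one vertically. The vertical
   one always uses the left side of the block; the horizontal one runs along the bottom
   side, unless the other path belongs to a neighbour in G', in which case it detours
   over the left side. Hence refined paths share an edge exactly for adjacent vertices.
   An x-monotone grid path is x-nondecreasing or x-nonincreasing, and the refinement
   preserves both properties. *)

Definition pairs {T : Type} (s : seq T) : seq (T * T) := zip s (behead s).

Lemma size_pairs {T : Type} (s : seq T) : size (pairs s) = (size s).-1.
Proof. by rewrite /pairs size_zip size_behead; case: s => //= x s; lia. Qed.

Lemma pairs_cat {T : Type} (s1 s2 : seq T) :
  pairs (s1 ++ s2) = pairs s1 ++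
    (if s1 is x :: s1' then (if s2 is y :: _ then [:: (last x s1', y)] else [::]) else [::])
    ++ pairs s2.
Proof.
elim: s1 => [|x s1 IH] //=; case: s1 IH => [|z s1] IH /=; first by case: s2 {IH}.
by rewrite /pairs /= in IH *; rewrite IH.
Qed.

Lemma pairs_map {T U : Type} (f : T -> U) s :
  pairs (map f s) = map (fun p => (f p.1, f p.2)) (pairs s).
Proof.
elim: s => [|x s IH] //=; case: s IH => [|y s] IH //=.
by rewrite /pairs /= in IH *; rewrite IH.
Qed.

Lemma nth_pairs {T : Type} (x0 : T) s k : k.+1 < size s ->
  nth (x0, x0) (pairs s) k = (nth x0 s k, nth x0 s k.+1).
Proof.
elim: s k => [|x s IH] [|k] //=; case: s IH => [|y s] IH //= hk.
exact: IH.
Qed.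

Section EqPairs.
Variable T : eqType.
Implicit Types (s : seq T) (a b : T).

Lemma mem_pairs s a b : (a, b) \in pairs s -> a \in s /\ b \in s.
Proof.
move=> /(nthP (a, a)) [k]; rewrite size_pairs => hk.
rewrite nth_pairs; last by lia.
by case=> <- <-; split; apply: mem_nth; lia.
Qed.

Lemma pairs_nthP x0 s ab : ab \in pairs s ->
  exists2 k, k.+1 < size s & ab = (nth x0 s k, nth x0 s k.+1).
Proof.
move=> /(nthP (x0, x0)) [k]; rewrite size_pairs => hk eab.
exists k; first lia.
by rewrite -{1}eab nth_pairs //; lia.
Qed.

Lemma index_pairs s a b : uniq s -> (a, b) \in pairs s -> index b s = (index a s).+1.
Proof.
move=> us /(pairs_nthP a) [k hk [-> ->]].
by rewrite !index_uniq //; lia.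
Qed.

End EqPairs.

Lemma all_pairs_nth {T : Type} (r : T -> T -> bool) (s : seq T) x0 k :
  all (fun ab : T * T => r ab.1 ab.2) (pairs s) -> k.+1 < size s ->
  r (nth x0 s k) (nth x0 s k.+1).
Proof.
move=> /(all_nthP (x0, x0)) h hk.
by have := h k; rewrite size_pairs nth_pairs //; apply; lia.
Qed.

Lemma gadj_sym p q : gadj p q = gadj q p.
Proof. by case: p q => p1 p2 [q1 q2]; rewrite /gadj /=; apply/idP/idP; lia. Qed.

Lemma gadj_irr p : gadj p p = false.
Proof. by case: p => p1 p2; rewrite /gadj /=; apply/negbTE/negP; lia. Qed.

Lemma gadj_right a : gadj a (right_of a).
Proof. by rewrite /gadj /right_of /= !eqxx !orbT. Qed.

Lemma gadj_up a : gadj a (up_of a).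
Proof. by rewrite /gadj /up_of /= !eqxx !orbT. Qed.

Lemma gadj_cases a b : gadj a b ->
  [\/ b = right_of a, a = right_of b, b = up_of a | a = up_of b].
Proof.
case: a b => [a1 a2] [b1 b2]; rewrite /gadj /right_of /up_of /=.
case/orP => /andP [/eqP e /orP [/eqP e'|/eqP e']]; subst.
- by constructor 4.
- by constructor 3.
- by constructor 2.
- by constructor 1.
Qed.

Lemma has_edgeE P p q : has_edge P p q = ((p, q) \in pairs P) || ((q, p) \in pairs P).
Proof.
rewrite /has_edge -/(pairs P); elim: (pairs P) => [|[x y] s IH] //=.
rewrite IH !in_cons !xpair_eqE (eq_sym p x) (eq_sym q y) (eq_sym q x) (eq_sym p y).
by case: (x == p) (y == q) (x == q) (y == p) ((p, q) \in s) ((q, p) \in s) => [] [] [] [] [] [].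
Qed.

Lemma has_edge_sym P p q : has_edge P p q = has_edge P q p.
Proof. by rewrite !has_edgeE orbC. Qed.

Lemma has_edge_mem P a b : has_edge P a b -> a \in P /\ b \in P.
Proof. by rewrite has_edgeE => /orP [] /mem_pairs []. Qed.

Lemma has_edge_gadj w h P a b : grid_path w h P -> has_edge P a b -> gadj a b.
Proof.
case=> _ _ _ /allP hadj; rewrite has_edgeE => /orP [] /hadj //=.
by rewrite gadj_sym.
Qed.

Definition x_nondecr (P : seq point) : bool :=
  all (fun ab : point * point => ab.1.1 <= ab.2.1) (pairs P).
Definition x_nonincr (P : seq point) : bool :=
  all (fun ab : point * point => ab.2.1 <= ab.1.1) (pairs P).

Lemma x_monotone_nondecr P : x_nondecr P -> x_monotone P.
Proof.
move=> hP c i j k hij hjk hk <- ek.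
have mono : {in gtn (size P) &, {homo (fun m => (nth (0, 0) P m).1) : m n / m <= n >-> m <= n}}.
  apply: homo_leq_in => [//|y x z h1 h2|m n|m _]; first exact: leq_trans h1 h2.
    by move=> _ hn l /andP [_ hl]; exact: ltn_trans hl hn.
  by move=> hm; exact: (all_pairs_nth (r := fun a b : point => a.1 <= b.1) _ hP hm).
have hj : j < size P by lia.
have := mono i j (leq_ltn_trans hij hj) hj hij; have := mono j k hj hk hjk; rewrite -ek; lia.
Qed.

Lemma x_monotone_nonincr P : x_nonincr P -> x_monotone P.
Proof.
move=> hP c i j k hij hjk hk <- ek.
have mono : {in gtn (size P) &, {homo (fun m => (nth (0, 0) P m).1) : m n / m <= n >-> n <= m}}.
  apply: homo_leq_in => [//|y x z h1 h2|m n|m _]; first exact: leq_trans h2 h1.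
    by move=> _ hn l /andP [_ hl]; exact: ltn_trans hl hn.
  by move=> hm; exact: (all_pairs_nth (r := fun a b : point => b.1 <= a.1) _ hP hm).
have hj : j < size P by lia.
have := mono i j (leq_ltn_trans hij hj) hj hij; have := mono j k hj hk hjk; rewrite -ek; lia.
Qed.

Section UnitSteps.
Variables (X : nat -> nat) (n : nat).
Hypothesis X_step : forall k, k.+1 < n -> X k.+1 <= (X k).+1 /\ X k <= (X k.+1).+1.

Lemma discrete_ivt a b c : a <= b -> b < n ->
  (X a <= c <= X b) || (X b <= c <= X a) -> exists2 i, a <= i <= b & X i = c.
Proof.
elim: b => [|b IH] hab hb hc.
  have ea : a = 0 by lia.
  by subst a; exists 0; lia.
case: (eqVneq a b.+1) => [ea|nab]; first by subst a; exists b.+1; lia.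
case: (eqVneq c (X b.+1)) => [->|hne]; first by exists b.+1; [lia|].
have hab' : a <= b by lia.
have [|i hi <-] := IH hab' (ltnW hb); first by have := X_step hb; lia.
by exists i; [lia|].
Qed.

Hypothesis X_level_interval : forall c i j k, i <= j -> j <= k -> k < n ->
  X i = c -> X k = c -> X j = c.

(* Going up then down (or down then up) with unit steps revisits a level after leaving it. *)
Lemma no_rise_and_fall s t : s.+1 < n -> t.+1 < n -> X s < X s.+1 -> X t.+1 < X t -> False.
Proof.
move=> hs ht up down; have := X_step hs; have := X_step ht => step_t step_s.
case: (ltngtP s t) => [lst|lts|est]; last by subst; lia.
- case: (leqP (X t.+1) (X s)) => hc.
  + have [k hk ek] : exists2 k, s.+1 <= k <= t.+1 & X k = X s
      by apply: discrete_ivt; lia.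
    by have := X_level_interval (leqnSn s) (_ : s.+1 <= k) (_ : k < n) erefl ek; lia.
  + have [k hk ek] : exists2 k, s <= k <= t & X k = X t.+1
      by apply: discrete_ivt; lia.
    by have := X_level_interval (_ : k <= t) (leqnSn t) ht ek erefl; lia.
- case: (leqP (X t) (X s.+1)) => hc.
  + have [k hk ek] : exists2 k, t.+1 <= k <= s.+1 & X k = X t
      by apply: discrete_ivt; lia.
    by have := X_level_interval (leqnSn t) (_ : t.+1 <= k) (_ : k < n) erefl ek; lia.
  + have [k hk ek] : exists2 k, t <= k <= s & X k = X s.+1
      by apply: discrete_ivt; lia.
    by have := X_level_interval (_ : k <= s) (leqnSn s) hs ek erefl; lia.
Qed.

End UnitSteps.

Lemma x_monotone_dichotomy P : all (fun ab : point * point => gadj ab.1 ab.2) (pairs P) ->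
  x_monotone P -> x_nondecr P \/ x_nonincr P.
Proof.
move=> hadj hm; case: (boolP (x_nondecr P)); first by left.
move=> /allPn [[a b] /(pairs_nthP (0, 0)) [t ht [ea eb]] /= fall]; right.
apply/allP => -[c d] /(pairs_nthP (0, 0)) [s hs [ec ed]] /=; rewrite leqNgt; apply/negP => rise.
have step k : k.+1 < size P -> (nth (0,0) P k.+1).1 <= (nth (0,0) P k).1.+1 /\
    (nth (0,0) P k).1 <= (nth (0,0) P k.+1).1.+1.
  move=> hk; have := all_pairs_nth (r := gadj) (0,0) hadj hk.
  by case: (nth (0,0) P k) => x1 y1; case: (nth (0,0) P k.+1) => x2 y2; rewrite /gadj /=; lia.
apply: (no_rise_and_fall step hm hs ht).
- by rewrite -ec -ed.
- by rewrite -ea -eb ltnNge.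
Qed.

(* Grid point a becomes the 2x2 block {2a.1-1, 2a.1} x {2a.2-1, 2a.2} of the doubled grid;
   [cell a d] is the point of that block at offset d. *)
Definition cell (a : point) (d : nat * nat) : point := (a.1.*2.-1 + d.1, a.2.*2.-1 + d.2).

Definition is_offset (d : nat * nat) : bool := (d.1 <= 1) && (d.2 <= 1).
Definition pos_pt (a : point) : bool := (0 < a.1) && (0 < a.2).

Lemma gadj_cell a d1 d2 : gadj d1 d2 -> gadj (cell a d1) (cell a d2).
Proof. by rewrite /gadj /cell /=; lia. Qed.

Lemma cell_inj a b d1 d2 : pos_pt a -> pos_pt b -> is_offset d1 -> is_offset d2 ->
  cell a d1 = cell b d2 -> a = b /\ d1 = d2.
Proof.
case: a b d1 d2 => [a1 a2] [b1 b2] [x1 y1] [x2 y2]; rewrite /pos_pt /is_offset /cell /= => *.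
have : a1.*2.-1 + x1 = b1.*2.-1 + x2 by congruence.
have : a2.*2.-1 + y1 = b2.*2.-1 + y2 by congruence.
by move=> *; split; congr pair; lia.
Qed.

(* The side of the block of a facing x; 0 stands for the left and lower sides, and for
   x = a, which encodes the missing neighbour at an end of a path. *)
Definition port (a x : point) : nat :=
  if x == right_of a then 1 else if x == up_of a then 2 else 0.

Definition port_corner (k : nat) : nat * nat :=
  if k == 1 then (1, 0) else if k == 2 then (0, 1) else (0, 0).

(* Consecutive blocks of a refined path are joined by the grid-edge from [gate a b] to
   [gate b a]. *)
Definition gate (a b : point) : point := cell a (port_corner (port a b)).

(* The part of a refined path inside a block, from the corner of port s to that of port t.
   A path crossing the block horizontally normally runs along its bottom side; with
   [detour] it goes around over the left side, the side used by every vertical crossing. *)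
Definition route (s t : nat) (detour : bool) : seq (nat * nat) :=
  match s, t with
  | 0, 1 => if detour then [:: (0,0); (0,1); (1,1); (1,0)] else [:: (0,0); (1,0)]
  | 1, 0 => if detour then [:: (1,0); (1,1); (0,1); (0,0)] else [:: (1,0); (0,0)]
  | 0, 2 => [:: (0,0); (0,1)]
  | 2, 0 => [:: (0,1); (0,0)]
  | 1, 2 => [:: (1,0); (1,1); (0,1)]
  | 2, 1 => [:: (0,1); (1,1); (1,0)]
  | _, _ => [:: port_corner s]
  end.

Ltac case_ports s t b := case: s => [|[|[|s]]] //; case: t => [|[|[|t]]] //; case: b.

Lemma port_le2 a x : port a x <= 2.
Proof. by rewrite /port; case: ifP => //; case: ifP. Qed.

Lemma port_corner_offset k : is_offset (port_corner k).
Proof. by rewrite /port_corner; case: ifP => //; case: ifP. Qed.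

Lemma route_neq0 s t b : route s t b != [::].
Proof. by case_ports s t b. Qed.

Lemma route_head s t b : s <= 2 -> t <= 2 -> head (0,0) (route s t b) = port_corner s.
Proof. by case_ports s t b. Qed.

Lemma route_last s t b : s <= 2 -> t <= 2 -> (s = t -> s = 0) ->
  last (0,0) (route s t b) = port_corner t.
Proof. by case_ports s t b => // _ _ /(_ erefl). Qed.

Lemma route_offset s t b : all is_offset (route s t b).
Proof. by case_ports s t b. Qed.

Lemma route_uniq s t b : uniq (route s t b).
Proof. by case_ports s t b. Qed.

Lemma route_gadj s t b : all (fun d : point * point => gadj d.1 d.2) (pairs (route s t b)).
Proof. by case_ports s t b. Qed.

Lemma route_x_nondecr s t b : s <= 2 -> t <= 2 -> s != 1 -> x_nondecr (route s t b).
Proof. by case_ports s t b. Qed.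

Lemma route_x_nonincr s t b : s <= 2 -> t <= 2 -> t != 1 -> x_nonincr (route s t b).
Proof. by case_ports s t b. Qed.

Lemma route_detour_left_side s t : s <= 1 -> t <= 1 -> s != t ->
  has_edge (route s t true) (0,0) (0,1).
Proof. by case: s t => [|[|s]] [|[|t]]. Qed.

Lemma route_vertical_left_side s t b : s <= 2 -> t <= 2 -> s != 1 -> t != 1 -> s != t ->
  has_edge (route s t b) (0,0) (0,1).
Proof. by case_ports s t b. Qed.

Lemma route_no_common_edge s t s' t' b' d1 d2 : s <= 1 -> t <= 1 -> s' <= 2 -> t' <= 2 ->
  s' != 1 -> t' != 1 -> has_edge (route s t false) d1 d2 -> ~~ has_edge (route s' t' b') d1 d2.
Proof.
move=> hs ht hs' ht' ns' nt'.
have : all (fun d => ~~ has_edge (route s' t' b') d.1 d.2) (pairs (route s t false)).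
  by case: s t s' t' hs ht hs' ht' ns' nt' => [|[|s]] [|[|t]] [|[|[|s']]] [|[|[|t']]] //; case: b'.
move=> /allP noedge; rewrite has_edgeE => /orP [] /noedge //=.
by rewrite has_edge_sym.
Qed.

Section Refinement.
Variable detour : point -> bool.

Definition block (p a n : point) : seq point :=
  map (cell a) (route (port a p) (port a n) (detour a)).

(* [p] is the predecessor of the first point of [L]; [refine_path] takes the first point
   itself, so that the refined path starts at the bottom-left corner of its first block. *)
Fixpoint refine_from (p : point) (L : seq point) : seq point :=
  if L is a :: L' then block p a (head a L') ++ refine_from a L' else [::].

(* The windows (predecessor, point, successor) of the points of [L]; the last point is
   its own successor. *)
Fixpoint windows (p : point) (L : seq point) : seq (point * point * point) :=
  if L is a :: L' then (p, a, head a L') :: windows a L' else [::].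

Lemma block_neq0 p a n : block p a n != [::].
Proof. by rewrite /block; case: route (route_neq0 (port a p) (port a n) (detour a)). Qed.

Lemma head_block p a n : head (0,0) (block p a n) = gate a p.
Proof.
rewrite /block; have := route_head (detour a) (port_le2 a p) (port_le2 a n).
by case: route (route_neq0 (port a p) (port a n) (detour a)) => //= d r _ ->.
Qed.

Lemma windows_mid p L x : x \in windows p L -> x.1.2 \in L.
Proof.
elim: L p => [|a L IH] p //=; rewrite in_cons => /orP [/eqP -> /=|/IH h].
  by rewrite inE eqxx.
by rewrite inE h orbT.
Qed.

Lemma windows_prev p L x : x \in windows p L ->
  (x.1.1 = p /\ ohead L = Some x.1.2) \/ (x.1.1, x.1.2) \in pairs L.
Proof.
elim: L p => [|a L IH] p //=; rewrite in_cons => /orP [/eqP -> /=|/IH [[-> h]|h]].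
- by left.
- by right; case: L {IH} h => [|b L] //= [<-]; rewrite inE eqxx.
- by right; case: L {IH} h => [|b L] //= h; rewrite inE h orbT.
Qed.

Lemma windows_next p L x : x \in windows p L -> x.2 = x.1.2 \/ (x.1.2, x.2) \in pairs L.
Proof.
elim: L p => [|a L IH] p //=; rewrite in_cons => /orP [/eqP -> /=|/IH [h|h]].
- by case: L {IH} => [|b L] /=; [left | right; rewrite inE eqxx].
- by left.
- by right; case: L {IH} h => [|b L] //= h; rewrite inE h orbT.
Qed.

Lemma windows_of_pair p L a b : (a, b) \in pairs L ->
  (exists q, (q, a, b) \in windows p L) /\ (exists n, (a, b, n) \in windows p L).
Proof.
elim: L p => [|c L IH] p //=; case: L IH => [|d L] IH //=.
rewrite in_cons => /orP [/eqP [-> ->]|h].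
  by split; [exists p | exists (head d L)]; rewrite !inE eqxx ?orbT.
have [[q hq] [n hn]] := IH c h.
by split; [exists q | exists n]; rewrite in_cons ?hq ?hn orbT.
Qed.

Lemma pairs_block_sub p L x : x \in windows p L ->
  {subset pairs (block x.1.1 x.1.2 x.2) <= pairs (refine_from p L)}.
Proof.
elim: L p => [|a L IH] p //=; rewrite in_cons => /orP [/eqP -> /=|/IH h] d hd.
  by rewrite pairs_cat mem_cat hd.
by rewrite pairs_cat !mem_cat (h _ hd) !orbT.
Qed.

Lemma mem_refine p L x : x \in refine_from p L ->
  exists a d, [/\ a \in L, is_offset d & x = cell a d].
Proof.
elim: L p => [|a L IH] p //=; rewrite mem_cat => /orP [|/IH [b [d [hb hd ->]]]].
  rewrite /block => /mapP [d hd ->]; exists a, d.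
  by rewrite inE eqxx (allP (route_offset _ _ _) d hd).
by exists b, d; rewrite inE hb orbT.
Qed.

Lemma pairs_refine p L xy : xy \in pairs (refine_from p L) ->
  (exists x d1 d2, [/\ x \in windows p L,
     (d1, d2) \in pairs (route (port x.1.2 x.1.1) (port x.1.2 x.2) (detour x.1.2)) &
     xy = (cell x.1.2 d1, cell x.1.2 d2)]) \/
  (exists q a b, [/\ (q, a, b) \in windows p L, (a, b) \in pairs L &
     xy = (last (0,0) (block q a b), gate b a)]).
Proof.
elim: L p => [|a L IH] p //=; rewrite pairs_cat !mem_cat => /orP [|/orP [|]].
- rewrite /block pairs_map => /mapP [[d1 d2] hd ->]; left.
  by exists (p, a, head a L), d1, d2; rewrite inE eqxx.
- case E: (block p a (head a L)) (block_neq0 p a (head a L)) => [|z s] // _.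
  case: L IH E => [|b L] IH E //=.
  case E2: (block a b (head b L)) (block_neq0 a b (head b L)) => [|z2 s2] // _.
  rewrite inE => /eqP ->; right; exists p, a, b; rewrite !inE !eqxx E.
  by have := head_block a b (head b L); rewrite E2 /= => <-.
- move=> /IH [[x [d1 [d2 [hx hd ->]]]]|[q [c [b [hw hcb ->]]]]].
    by left; exists x, d1, d2; rewrite inE hx orbT.
  right; exists q, c, b; split => //; first by rewrite inE hw orbT.
  by case: L {IH} hw hcb => [|d L] //= _ hcb; rewrite inE hcb orbT.
Qed.

Lemma refine_uniq p L : uniq L -> all pos_pt L -> uniq (refine_from p L).
Proof.
elim: L p => [|a L IH] p //= /andP [aL uL] /andP [pa pL].
rewrite cat_uniq IH // andbT; apply/andP; split.
  rewrite /block map_inj_in_uniq ?route_uniq // => d1 d2 h1 h2.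
  by move/(cell_inj pa pa (allP (route_offset _ _ _) _ h1) (allP (route_offset _ _ _) _ h2)) => [].
apply/hasPn => x /mem_refine [b [d [hb hd ->]]]; apply/negP => /mapP [d' hd' e].
have [eb _] := cell_inj (allP pL b hb) pa hd (allP (route_offset _ _ _) _ hd') e.
by move: aL; rewrite -eb hb.
Qed.

Definition refine_path (L : seq point) : seq point := refine_from (head (0,0) L) L.

End Refinement.

Definition path_windows (L : seq point) := windows (head (0,0) L) L.

Lemma port_self a : port a a = 0.
Proof.
case: a => a1 a2; rewrite /port /right_of /up_of !xpair_eqE /=.
by case: ifP; [lia|]; case: ifP; lia.
Qed.

Lemma port_right a : port a (right_of a) = 1.
Proof. by rewrite /port eqxx. Qed.

Lemma port_up a : port a (up_of a) = 2.
Proof.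
rewrite /port eqxx; case: ifP => //.
by case: a => a1 a2; rewrite /right_of /up_of /= xpair_eqE; lia.
Qed.

Lemma port_from_right a : port (right_of a) a = 0.
Proof.
case: a => a1 a2; rewrite /port /right_of /up_of !xpair_eqE /=.
by case: ifP; [lia|]; case: ifP; lia.
Qed.

Lemma port_from_up a : port (up_of a) a = 0.
Proof.
case: a => a1 a2; rewrite /port /right_of /up_of !xpair_eqE /=.
by case: ifP; [lia|]; case: ifP; lia.
Qed.

Lemma port_eq1 a x : port a x = 1 -> x = right_of a.
Proof. by rewrite /port; case: ifP => [/eqP|] //; case: ifP. Qed.

Lemma port_eq2 a x : port a x = 2 -> x = up_of a.
Proof. by rewrite /port; case: ifP => //; case: ifP => [/eqP|]. Qed.

Ltac gate_cases :=
  rewrite /gate ?port_right ?port_up ?port_from_right ?port_from_up;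
  repeat match goal with p : point |- _ =>
    let x := fresh "x" in let y := fresh "y" in destruct p as [x y] end;
  rewrite /cell /port_corner /gadj /right_of /up_of /=; simpl in *; lia.

Lemma gadj_gate a b : pos_pt a -> pos_pt b -> gadj a b -> gadj (gate a b) (gate b a).
Proof. by move=> /andP [a1 a2] /andP [b1 b2] /gadj_cases [] e; subst; gate_cases. Qed.

Lemma gate_x_nondecr a b : gadj a b -> a.1 <= b.1 -> (gate a b).1 <= (gate b a).1.
Proof. by move=> /gadj_cases [] e; subst; gate_cases. Qed.

Lemma gate_x_nonincr a b : gadj a b -> b.1 <= a.1 -> (gate b a).1 <= (gate a b).1.
Proof. by move=> /gadj_cases [] e; subst; gate_cases. Qed.

Lemma gate_cell_eq a b c d : pos_pt a -> pos_pt c -> is_offset d -> gate a b = cell c d -> a = c.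
Proof. by move=> pa pc hd /(cell_inj pa pc (port_corner_offset _) hd) []. Qed.

Lemma gates_in_block a b c d1 d2 : pos_pt a -> pos_pt b -> pos_pt c ->
  is_offset d1 -> is_offset d2 ->
  gadj b c -> gate b c = cell a d1 -> gate c b = cell a d2 -> False.
Proof.
move=> pa pb pc hd1 hd2 hbc /(gate_cell_eq pb pa hd1) eb /(gate_cell_eq pc pa hd2) ec.
by move: hbc; rewrite eb ec gadj_irr.
Qed.

Section Windows.
Variable L : seq point.

Lemma window_prev p a n : (p, a, n) \in path_windows L -> p = a \/ (p, a) \in pairs L.
Proof.
move/windows_prev => [[/= -> hL]|hL]; last by right.
by left; move: hL; case: L => //= b s [->].
Qed.

Lemma window_next p a n : (p, a, n) \in path_windows L -> n = a \/ (a, n) \in pairs L.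
Proof. exact: windows_next. Qed.

Lemma window_edge p a n x : (p, a, n) \in path_windows L -> (x == p) || (x == n) -> x != a ->
  has_edge L a x.
Proof.
move=> hw /orP [] /eqP -> hxa; rewrite has_edgeE.
- by case: (window_prev hw) => [/eqP|->]; rewrite ?orbT // (negbTE hxa).
- by case: (window_next hw) => [/eqP|->]; rewrite // (negbTE hxa).
Qed.

Lemma window_port_right p a n : (p, a, n) \in path_windows L ->
  (port a p == 1) || (port a n == 1) -> has_edge L a (right_of a).
Proof.
move=> hw /orP [] /eqP /port_eq1 e; apply: (window_edge hw); rewrite -e ?eqxx ?orbT //;
  by apply/eqP => ea; move: e; rewrite ea; case: (a) => a1 a2 [] /=; lia.
Qed.

Lemma window_port_up p a n : (p, a, n) \in path_windows L ->
  (port a p == 2) || (port a n == 2) -> has_edge L a (up_of a).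
Proof.
move=> hw /orP [] /eqP /port_eq2 e; apply: (window_edge hw); rewrite -e ?eqxx ?orbT //;
  by apply/eqP => ea; move: e; rewrite ea; case: (a) => a1 a2 [] /=; lia.
Qed.

Lemma refine_has_edge detour q a n d1 d2 : (q, a, n) \in path_windows L ->
  has_edge (route (port a q) (port a n) (detour a)) d1 d2 ->
  has_edge (refine_path detour L) (cell a d1) (cell a d2).
Proof.
move=> hw; rewrite !has_edgeE => /orP [] hd; apply/orP; [left|right];
  apply: (pairs_block_sub hw); rewrite /= /block pairs_map; apply/mapP.
- by exists (d1, d2).
- by exists (d2, d1).
Qed.

End Windows.

Section GridPath.
Variables (w h : nat) (L : seq point).
Hypothesis L_path : grid_path w h L.

Let L_uniq : uniq L. Proof. by case: L_path. Qed.
Let L_gadj : all (fun ab : point * point => gadj ab.1 ab.2) (pairs L). Proof. by case: L_path. Qed.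

Lemma grid_path_pos a : a \in L -> pos_pt a.
Proof. by case: L_path => _ _ /allP /(_ a) + _ ha; rewrite /in_grid /pos_pt => /(_ ha); lia. Qed.

Lemma pairs_no_back x y : (x, y) \in pairs L -> (y, x) \in pairs L -> False.
Proof. by move=> h1 h2; have := index_pairs L_uniq h1; have := index_pairs L_uniq h2; lia. Qed.

Lemma window_ports_eq p a n : (p, a, n) \in path_windows L -> port a p = port a n -> port a p = 0.
Proof.
move=> hw e; case E: (port a p) => [|k] //; exfalso.
have epn : p = n.
  move: (port_le2 a p); rewrite E; case: k E => [|[|k]] E //= _.
  - by rewrite (port_eq1 E) (port_eq1 (esym (etrans (esym E) e))).
  - by rewrite (port_eq2 E) (port_eq2 (esym (etrans (esym E) e))).
subst n; have pa : p != a by apply/eqP => epa; move: E; rewrite epa port_self.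
case: (window_prev hw) => [/eqP|h1]; first by rewrite (negbTE pa).
case: (window_next hw) => [epa|h2]; first by move/eqP: pa.
exact: pairs_no_back h1 h2.
Qed.

Lemma window_through_edge a x : has_edge L a x -> 0 < port a x ->
  exists q n, (q, a, n) \in path_windows L /\ port a q != port a n.
Proof.
move=> hax hx.
have [q [n [hw hqn]]] : exists q n, (q, a, n) \in path_windows L /\ (q = x \/ n = x).
  move: hax; rewrite has_edgeE => /orP [] hh.
  - by have [[q hq] _] := windows_of_pair (head (0,0) L) hh; exists q, x; split => //; right.
  - by have [_ [n hn]] := windows_of_pair (head (0,0) L) hh; exists x, n; split => //; left.
exists q, n; split => //.
apply/eqP => e; have z := window_ports_eq hw e.
by case: hqn => exq; move: hx; rewrite -exq ?z -?e ?z.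
Qed.

Lemma last_block detour q a b : (q, a, b) \in path_windows L ->
  last (0,0) (block detour q a b) = gate a b.
Proof.
move=> hw; have := route_last (detour a) (port_le2 a q) (port_le2 a b) (window_ports_eq hw).
rewrite /block /gate.
case: route (route_neq0 (port a q) (port a b) (detour a)) => [|d r] // _ /= <-.
by rewrite last_map.
Qed.

Variable detour : point -> bool.
Let R := refine_path detour L.

Lemma refine_grid_path : grid_path (2 * w) (2 * h) R.
Proof.
have [L0 _ L_grid _] := L_path; split.
- rewrite /R /refine_path; case: L L0 => //= a s _.
  by case: block (block_neq0 detour (head (0,0) (a :: s)) a (head a s)).
- by apply: refine_uniq => //; apply/allP => a /grid_path_pos.
- apply/allP => x /mem_refine [a [d [ha /andP [d1 d2] ->]]].
  by have := allP L_grid a ha; rewrite /in_grid /cell /=; lia.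
- apply/allP => xy /pairs_refine [[x [d1 [d2 [_ hd ->]]]]|[q [a [b [hw hab ->]]]]] /=.
    by apply: gadj_cell; exact: (allP (route_gadj _ _ _) _ hd).
  have [ha hb] := mem_pairs hab; rewrite (last_block detour hw).
  by apply: gadj_gate; [exact: grid_path_pos|exact: grid_path_pos|exact: (allP L_gadj _ hab)].
Qed.

Lemma refine_has_edgeP p q : has_edge R p q ->
  (exists q0 a n d1 d2, [/\ (q0, a, n) \in path_windows L,
     has_edge (route (port a q0) (port a n) (detour a)) d1 d2,
     is_offset d1, is_offset d2 & p = cell a d1 /\ q = cell a d2]) \/
  (exists a b, has_edge L a b /\ p = gate a b /\ q = gate b a).
Proof.
have off s t b d : d \in route s t b -> is_offset d by move/(allP (route_offset s t b)).
rewrite has_edgeE => /orP [] /pairs_refine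
  [[[[q0 a] n] [d1 [d2 [hw hd [-> ->]]]]]|[q0 [a [b [hw hab e]]]]].
- have [h1 h2] := mem_pairs hd; left; exists q0, a, n, d1, d2.
  by rewrite has_edgeE hd (off _ _ _ _ h1) (off _ _ _ _ h2).
- right; rewrite (last_block detour hw) in e; case: e => -> ->; exists a, b.
  by rewrite has_edgeE hab.
- have [h1 h2] := mem_pairs hd; left; exists q0, a, n, d2, d1.
  by rewrite has_edgeE hd orbT (off _ _ _ _ h1) (off _ _ _ _ h2).
- right; rewrite (last_block detour hw) in e; case: e => -> ->; exists b, a.
  by rewrite has_edgeE hab orbT.
Qed.

Lemma refine_x_nondecr : x_nondecr L -> x_nondecr R.
Proof.
move=> hL; apply/allP => xy
  /pairs_refine [[[[q0 a] n] [d1 [d2 [hw hd ->]]]]|[q [a [b [hw hab ->]]]]] /=.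
- have hq : port a q0 != 1.
    apply/eqP => /port_eq1 e; subst q0; case: (window_prev hw) => [|hp].
    + by case: (a) => a1 a2 [] /=; lia.
    + by have := allP hL _ hp => /=; lia.
  have := allP (route_x_nondecr (detour a) (port_le2 a q0) (port_le2 a n) hq) _ hd.
  by rewrite /cell /=; lia.
- rewrite (last_block detour hw); apply: gate_x_nondecr.
  + exact: (allP L_gadj _ hab).
  + exact: (allP hL _ hab).
Qed.

Lemma refine_x_nonincr : x_nonincr L -> x_nonincr R.
Proof.
move=> hL; apply/allP => xy
  /pairs_refine [[[[q0 a] n] [d1 [d2 [hw hd ->]]]]|[q [a [b [hw hab ->]]]]] /=.
- have hn : port a n != 1.
    apply/eqP => /port_eq1 e; subst n; case: (window_next hw) => [|hp].
    + by case: (a) => a1 a2 [] /=; lia.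
    + by have := allP hL _ hp => /=; lia.
  have := allP (route_x_nonincr (detour a) (port_le2 a q0) (port_le2 a n) hn) _ hd.
  by rewrite /cell /=; lia.
- rewrite (last_block detour hw); apply: gate_x_nonincr.
  + exact: (allP L_gadj _ hab).
  + exact: (allP hL _ hab).
Qed.

End GridPath.

Section ProperVPG.
Variables (V : finType) (w h : nat) (RV : V -> seq point).
Hypothesis RV_path : forall v, grid_path w h (RV v).
Hypothesis RV_edge_disjoint : forall v u, v != u -> forall p q : point, gadj p q ->
  ~ (has_edge (RV v) p q /\ has_edge (RV u) p q).
Hypothesis RV_crossing : forall v u, v != u -> forall p : point, p \in RV v -> p \in RV u ->
  (has_edge (RV v) p (right_of p) && has_edge (RV u) p (up_of p)) \/
  (has_edge (RV v) p (up_of p) && has_edge (RV u) p (right_of p)).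

Lemma no_three_paths_at v u z a : v != u -> v != z -> u != z ->
  a \in RV v -> a \in RV u -> a \in RV z -> False.
Proof.
move=> hvu hvz huz hv hu hz.
have noRR x y : x != y -> has_edge (RV x) a (right_of a) -> has_edge (RV y) a (right_of a) -> False.
  by move=> hxy h1 h2; exact: (RV_edge_disjoint hxy (gadj_right a) (conj h1 h2)).
have noUU x y : x != y -> has_edge (RV x) a (up_of a) -> has_edge (RV y) a (up_of a) -> False.
  by move=> hxy h1 h2; exact: (RV_edge_disjoint hxy (gadj_up a) (conj h1 h2)).
have huv : u != v by rewrite eq_sym.
have hzv : z != v by rewrite eq_sym.
have hzu : z != u by rewrite eq_sym.
(* Each pair of paths through a splits the two directions, so two of the three share one. *)
case: (RV_crossing hvu hv hu) => /andP [? ?]; case: (RV_crossing hvz hv hz) => /andP [? ?];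
  case: (RV_crossing huz hu hz) => /andP [? ?];
  match goal with
  | H1 : is_true (has_edge (RV ?x) a (right_of a)), H2 : is_true (has_edge (RV ?y) a (right_of a)),
    Hn : is_true (?x != ?y) |- _ => exact: (noRR _ _ Hn H1 H2)
  | H1 : is_true (has_edge (RV ?x) a (up_of a)), H2 : is_true (has_edge (RV ?y) a (up_of a)),
    Hn : is_true (?x != ?y) |- _ => exact: (noUU _ _ Hn H1 H2)
  end.
Qed.

Lemma window_ports_horizontal v u a q n : v != u -> has_edge (RV u) a (up_of a) ->
  (q, a, n) \in path_windows (RV v) -> port a q <= 1 /\ port a n <= 1.
Proof.
move=> hvu Uu hw; suff: (port a q != 2) && (port a n != 2).
  by have := port_le2 a q; have := port_le2 a n; lia.
rewrite -negb_or; apply/negP => /(window_port_up hw) Uv.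
exact: (RV_edge_disjoint hvu (gadj_up a) (conj Uv Uu)).
Qed.

Lemma window_ports_vertical v u a q n : v != u -> has_edge (RV u) a (right_of a) ->
  (q, a, n) \in path_windows (RV v) -> port a q != 1 /\ port a n != 1.
Proof.
move=> hvu Ru hw; suff: ~~ ((port a q == 1) || (port a n == 1)) by rewrite negb_or => /andP.
apply/negP => /(window_port_right hw) Rv.
exact: (RV_edge_disjoint hvu (gadj_right a) (conj Rv Ru)).
Qed.

Variables (V' : finType) (e' : rel V') (f : V' -> V).
Hypothesis f_inj : injective f.
Hypothesis e'_sym : symmetric e'.

Let f_neq x y : x != y -> f x != f y.
Proof. by apply: contraNneq => /f_inj ->. Qed.

Definition detour_at (x : V') (a : point) : bool :=
  [exists u, (u != x) && (a \in RV (f u)) && e' x u].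

Definition RE (x : V') : seq point := refine_path (detour_at x) (RV (f x)).

Lemma crossing_share_edge x y a : x != y -> e' x y -> a \in RV (f y) ->
  has_edge (RV (f x)) a (right_of a) -> has_edge (RV (f y)) a (up_of a) ->
  share_edge (RE x) (RE y).
Proof.
move=> hxy exy hay Rx Uy; have fxy := f_neq hxy.
have fyx : f y != f x by rewrite eq_sym.
have dx : detour_at x a by apply/existsP; exists y; rewrite exy hay eq_sym hxy.
exists (cell a (0,0)), (cell a (0,1)); split; first exact: gadj_cell.
- have := window_through_edge (RV_path (f x)) Rx; rewrite port_right => /(_ isT) [q [n [hw hne]]].
  have [hq hn] := window_ports_horizontal fxy Uy hw.
  by rewrite /RE; apply: (refine_has_edge hw); rewrite dx; apply: route_detour_left_side.
- have := window_through_edge (RV_path (f y)) Uy; rewrite port_up => /(_ isT) [q [n [hw hne]]].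
  have [hq hn] := window_ports_vertical fyx Rx hw.
  by rewrite /RE; apply: (refine_has_edge hw); apply: route_vertical_left_side; rewrite ?port_le2.
Qed.

Lemma crossing_block_edge x y a q0 n0 q1 n1 d1 d2 : x != y ->
  a \in RV (f x) -> a \in RV (f y) ->
  has_edge (RV (f x)) a (right_of a) -> has_edge (RV (f y)) a (up_of a) ->
  (q0, a, n0) \in path_windows (RV (f x)) -> (q1, a, n1) \in path_windows (RV (f y)) ->
  has_edge (route (port a q0) (port a n0) (detour_at x a)) d1 d2 ->
  has_edge (route (port a q1) (port a n1) (detour_at y a)) d1 d2 ->
  e' x y.
Proof.
move=> hxy hax hay Rx Uy hw0 hw1 hr0 hr1; have fxy := f_neq hxy.
have fyx : f y != f x by rewrite eq_sym.
case dx: (detour_at x a) hr0 => hr0.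
  case/existsP: dx => z /andP [/andP [hzx haz] exz].
  have [<- //|hzy] := eqVneq z y; rewrite eq_sym in hzy.
  by rewrite eq_sym in hzx; case: (no_three_paths_at fxy (f_neq hzx) (f_neq hzy) hax hay haz).
have [hq0 hn0] := window_ports_horizontal fxy Uy hw0.
have [hq1 hn1] := window_ports_vertical fyx Rx hw1.
by have := route_no_common_edge (detour_at y a) hq0 hn0 (port_le2 a q1) (port_le2 a n1) hq1 hn1 hr0;
  rewrite hr1.
Qed.

Lemma share_edge_crossing v u : v != u -> e' v u ->
  (exists a, [/\ a \in RV (f v), a \in RV (f u) &
   ((has_edge (RV (f v)) a (right_of a) && has_edge (RV (f u)) a (up_of a)) \/
    (has_edge (RV (f v)) a (up_of a) && has_edge (RV (f u)) a (right_of a)))]) ->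
  share_edge (RE v) (RE u).
Proof.
move=> hvu evu [a [hav hau [/andP [h1 h2]|/andP [h1 h2]]]].
  exact: (crossing_share_edge hvu evu hau h1 h2).
rewrite eq_sym in hvu; rewrite e'_sym in evu.
have [p [q [g H1 H2]]] := crossing_share_edge hvu evu hav h2 h1.
by exists p, q.
Qed.

Lemma share_edge_adjacent v u : v != u -> share_edge (RE v) (RE u) -> e' v u.
Proof.
move=> hvu [p [q [_ hv hu]]]; have fvu := f_neq hvu.
have pos x b : b \in RV (f x) -> pos_pt b by exact: grid_path_pos.
have hpos x b c : has_edge (RV (f x)) b c -> pos_pt b /\ pos_pt c.
  by move/has_edge_mem => [hb hc]; split; apply: (pos x).
case: (refine_has_edgeP (RV_path (f v)) hv) =>
    [[q0 [a [n0 [d1 [d2 [hw0 hr0 o1 o2 [ep0 eq0]]]]]]]|[b [c [hbc [ep0 eq0]]]]];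
  case: (refine_has_edgeP (RV_path (f u)) hu) =>
    [[q1 [a' [n1 [d1' [d2' [hw1 hr1 o1' o2' [ep eq]]]]]]]|[b' [c' [hbc' [ep eq]]]]];
  rewrite {}ep0 {}eq0 in ep eq.
- have hav : a \in RV (f v) := windows_mid hw0.
  have hau : a' \in RV (f u) := windows_mid hw1.
  have [ea ed1] := cell_inj (pos _ _ hav) (pos _ _ hau) o1 o1' ep.
  have [_ ed2] := cell_inj (pos _ _ hav) (pos _ _ hau) o2 o2' eq.
  move: hw1 hr1 hau; rewrite -ea -ed1 -ed2 => hw1 hr1 hau.
  case: (RV_crossing fvu hav hau) => /andP [h1 h2].
    exact: (crossing_block_edge hvu hav hau h1 h2 hw0 hw1 hr0 hr1).
  by rewrite e'_sym; apply: (crossing_block_edge _ hau hav h2 h1 hw1 hw0 hr1 hr0); rewrite eq_sym.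
- have [pb pc] := hpos _ _ _ hbc'; have pa : pos_pt a := pos _ _ (windows_mid hw0).
  by case: (gates_in_block pa pb pc o1 o2 (has_edge_gadj (RV_path _) hbc') (esym ep) (esym eq)).
- have [pb pc] := hpos _ _ _ hbc; have pa : pos_pt a' := pos _ _ (windows_mid hw1).
  by case: (gates_in_block pa pb pc o1' o2' (has_edge_gadj (RV_path _) hbc) ep eq).
- have [pb pc] := hpos _ _ _ hbc; have [pb' pc'] := hpos _ _ _ hbc'.
  have eb := gate_cell_eq pb pb' (port_corner_offset _) ep.
  have ec := gate_cell_eq pc pc' (port_corner_offset _) eq.
  subst b' c'.
  by case: (RV_edge_disjoint fvu (has_edge_gadj (RV_path _) hbc) (conj hbc hbc')).
Qed.

Lemma RE_x_monotone x : x_monotone (RV (f x)) -> x_monotone (RE x).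
Proof.
have [_ _ _ hadj] := RV_path (f x).
case/(x_monotone_dichotomy hadj) => hmono.
- exact/x_monotone_nondecr/refine_x_nondecr.
- exact/x_monotone_nonincr/refine_x_nonincr.
Qed.

End ProperVPG.

Theorem lemma1 (V : finType) (e : rel V) (w h : nat) (RV : V -> seq point) :
  symmetric e -> irreflexive e ->
  VPG_rep w h e RV -> proper_VPG RV ->
  forall (V' : finType) (e' : rel V') (f : V' -> V),
    injective f -> symmetric e' -> irreflexive e' ->
    (forall x y, e' x y -> e (f x) (f y)) ->
    exists RE : V' -> seq point,
      EPG_rep (2 * w) (2 * h) e' RE /\
      ((forall v, x_monotone (RV v)) -> forall v', x_monotone (RE v')).
Proof.
move=> _ _ [RV_path RV_rep] [RV_disj RV_cross] V' e' f f_inj e'_sym _ e'_e.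
exists (RE RV e' f); split; [split|].
- by move=> x; apply: refine_grid_path.
- move=> v u hvu; split; last exact: share_edge_adjacent.
  move=> evu; apply: share_edge_crossing => //.
  have fvu : f v != f u by apply: contraNneq hvu => /f_inj ->.
  have [a [hav hau]] := (RV_rep _ _ fvu).1 (e'_e _ _ evu).
  by exists a; split => //; apply: RV_cross.
- by move=> hmono v; apply: RE_x_monotone.
Qed.
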